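(* Consider the fixed-design additive regression setting, the estimator $\hat g$ and tuning parameters described in the context. Let $\bar g=\sum_{j=1}^p\bar g_j\in\mathcal G$, let $C_0>0$, and let $S=\{1\le j\le p:\|\bar g_j\|_n>C_0\lambda_{nj}\}$. Assume the sub-Gaussian noise condition, the entropy condition, and the empirical compatibility condition for this $S$ with constants $\kappa_0>0$, $\xi_0>1$. Then for any $0\le q\le1$ and $A_0>(\xi_0+1)/(\xi_0-1)$, there is a constant $K$ depending only on $(q,A_0,C_0,\xi_0,\kappa_0)$ such that, with probability at least $1-\epsilon$, $$\tfrac12\|\hat g-g^*\|_n^2+\tfrac12\|\hat g-\bar g\|_n^2+(A_0-1)R_n(\hat g-\bar g)\le K\Big\{\|\bar g-g^*\|_n^2+\sum_{j=1}^p\big(\rho_{nj}\|\bar g_j\|_{F,j}+\lambda_{nj}^{2-q}\|\bar g_j\|_n^q\big)\Big\},$$ with the convention $0^0=0$.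
   Context: Data: $(Y_i,X_i)$, $i=1,\dots,n$, $Y_i=g^*(X_i)+\varepsilon_i$, $g^*$ arbitrary. Fixed design: $X_1,\dots,X_n$ deterministic; probabilities refer to the noise. For $j=1,\dots,p$, $x^{(j)}$ is a fixed sub-vector of coordinates of $x$, $\mathcal G_j$ is a vector space of functions of $x^{(j)}$ with semi-norm $\|\cdot\|_{F,j}$, $\mathcal G=\{\sum_jg_j(x^{(j)}):g_j\in\mathcal G_j\}$; each $g\in\mathcal G$ comes with a decomposition $g=\sum_jg_j$ to which component-wise quantities refer. $\|f\|_n^2=n^{-1}\sum_if(X_i)^2$, $\|Y-g\|_n^2=n^{-1}\sum_i\{Y_i-g(X_i)\}^2$, $\langle\varepsilon,f\rangle_n=n^{-1}\sum_i\varepsilon_if(X_i)$; $H(u,\mathcal F,\|\cdot\|)$ is the log covering number at radius $u$. Sub-Gaussian noise condition: $\varepsilon_i$ independent, mean zero, $\max_iD_0E\exp(\varepsilon_i^2/D_0)\le D_1$. $C_1=C_1(D_0,D_1)>0$ is a constant depending only on $(D_0,D_1)$ such that for every $\delta>0$, every class $\mathcal F$ with $\sup_{\mathcal F}\|f\|_n\le\delta$ and every $\psi\ge\int_0^\delta H^{1/2}(u,\mathcal F,\|\cdot\|_n)du$, $P\{\sup_{\mathcal F}|\langle\varepsilon,f\rangle_n|/C_1>n^{-1/2}\psi+\delta\sqrt{t/n}\}\le e^{-t}$ for all $t>0$. Entropy condition: with $\mathcal G_j(\delta)=\{f\in\mathcal G_j:\|f\|_{F,j}+\|f\|_n/\delta\le1\}$,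 $\psi_{nj}(\delta)\ge\int_0^\delta H^{1/2}(u,\mathcal G_j(\delta),\|\cdot\|_n)du$ for $0<\delta\le1$. Tuning and estimator: $0<\epsilon<1$, $0<w_{nj}\le1$, $\gamma_{nj}=n^{-1/2}\psi_{nj}(w_{nj})/w_{nj}$, $\lambda_{nj}=C_1\{\gamma_{nj}+\sqrt{\log(p/\epsilon)/n}\}$, $\rho_{nj}=\lambda_{nj}w_{nj}$, $R_n(g)=\sum_j(\rho_{nj}\|g_j\|_{F,j}+\lambda_{nj}\|g_j\|_n)$; $\hat g=\sum_j\hat g_j$ minimizes $\|Y-g\|_n^2/2+A_0R_n(g)$ over $g\in\mathcal G$ and decompositions. $R_n(\hat g-\bar g)=\sum_j\{\rho_{nj}\|\hat g_j-\bar g_j\|_{F,j}+\lambda_{nj}\|\hat g_j-\bar g_j\|_n\}$. Empirical compatibility condition for $(S,\kappa_0,\xi_0)$: for all $f_j\in\mathcal G_j$, $f=\sum_jf_j$, if $\sum_{j=1}^p\lambda_{nj}w_{nj}\|f_j\|_{F,j}+\sum_{j\notin S}\lambda_{nj}\|f_j\|_n\le\xi_0\sum_{j\in S}\lambda_{nj}\|f_j\|_n$ then $\kappa_0^2(\sum_{j\in S}\lambda_{nj}\|f_j\|_n)^2\le(\sum_{j\in S}\lambda_{nj}^2)\|f\|_n^2$. *)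

From HB Require Import structures.
From mathcomp Require Import all_boot all_order all_algebra.
From mathcomp Require Import all_classical all_reals all_analysis.
Set Implicit Arguments. Unset Strict Implicit. Unset Printing Implicit Defensive.
Import Order.TTheory GRing.Theory Num.Theory.
Local Open Scope ring_scope.
Local Open Scope classical_set_scope.

Section Defs.
Context {R : realType}.

Definition emp2 (n : nat) (U : Type) (Z : 'I_n -> U) (f : U -> R) : R :=
  n%:R^-1 * \sum_(i < n) f (Z i) ^+ 2.
Definition empnorm (n : nat) (U : Type) (Z : 'I_n -> U) (f : U -> R) : R :=
  Num.sqrt (emp2 Z f).

Definition subvec (D d : nat) (s : 'I_d -> 'I_D) (x : 'rV[R]_D) : 'rV[R]_d :=
  \row_(k < d) x ord0 (s k).

Definition fun_subspace (U : Type) (G : set (U -> R)) : Prop :=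
  G (fun _ => 0) /\
  (forall f g, G f -> G g -> G (fun x => f x + g x)) /\
  (forall (a : R) f, G f -> G (fun x => a * f x)).

Definition seminorm_on (U : Type) (G : set (U -> R)) (N : (U -> R) -> R) : Prop :=
  (forall f, G f -> 0 <= N f) /\
  (forall (a : R) f, G f -> N (fun x => a * f x) = `|a| * N f) /\
  (forall f g, G f -> G g -> N (fun x => f x + g x) <= N f + N g).

Definition emp_covered_by (n : nat) (U : Type) (Z : 'I_n -> U) (F : set (U -> R))
  (u : R) (m : nat) : Prop :=
  exists c : 'I_m -> (U -> R),
    forall f, F f -> exists k : 'I_m, empnorm Z (fun x => f x - c k x) <= u.

(** log covering number H(u, F, ||.||_n)  (+oo if no finite cover) *)
Definition log_cover (n : nat) (U : Type) (Z : 'I_n -> U) (F : set (U -> R))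
  (u : R) : \bar R :=
  ereal_inf [set (ln (m%:R : R))%:E | m in [set m | emp_covered_by Z F u m]].

Definition esqrt (x : \bar R) : \bar R :=
  match x with
  | EFin r => (Num.sqrt r)%:E
  | EPInf => +oo%E
  | ENInf => 0%E
  end.

Definition entropy_integral (n : nat) (U : Type) (Z : 'I_n -> U)
  (F : set (U -> R)) (delta : R) : \bar R :=
  (\int[@lebesgue_measure R]_(u in [set u : R | (0 < u <= delta)%R])
      esqrt (log_cover Z F u))%E.

Definition mutually_independent (d : measure_display) (Omega : measurableType d)
  (P : probability Omega R) (n : nat) (eps : 'I_n -> Omega -> R) : Prop :=
  forall B : 'I_n -> set R, (forall i, measurable (B i)) ->
    P (\bigcap_(i in [set: 'I_n]) (eps i @^-1` B i)) =
    (\prod_(i < n) P (eps i @^-1` B i))%E.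

Definition subgaussian_noise (d : measure_display) (Omega : measurableType d)
  (P : probability Omega R) (n : nat) (eps : 'I_n -> Omega -> R) (D0 D1 : R) : Prop :=
  0 < D0 /\
  (forall i, measurable_fun setT (eps i)) /\
  mutually_independent P eps /\
  (forall i, P.-integrable setT (fun w => (eps i w)%:E)) /\
  (forall i, (\int[P]_w (eps i w)%:E = 0)%E) /\
  (forall i, (D0%:E * \int[P]_w (expR (eps i w ^+ 2 / D0))%:E <= D1%:E)%E).

(** the maximal inequality defining C_1 (for this noise):
    for every delta > 0, every class F with sup ||f||_n <= delta, every psi
    dominating the entropy integral and every t > 0,
    P{ sup_F |<eps,f>_n| / C1 > n^{-1/2} psi + delta sqrt(t/n) } <= e^{-t},
    i.e. there is an event of probability >= 1 - e^{-t} on which the sup is small. *)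
Definition noise_maximal_ineq (d : measure_display) (Omega : measurableType d)
  (P : probability Omega R) (n D : nat) (X : 'I_n -> 'rV[R]_D)
  (eps : 'I_n -> Omega -> R) (C1 : R) : Prop :=
  forall (delta : R) (F : set ('rV[R]_D -> R)) (psi t : R),
    0 < delta -> (forall f, F f -> empnorm X f <= delta) ->
    (entropy_integral X F delta <= psi%:E)%E -> 0 < t ->
    exists E : set Omega, measurable E /\ ((1 - expR (- t))%:E <= P E)%E /\
      forall w, E w -> forall f, F f ->
        `| n%:R^-1 * \sum_(i < n) eps i w * f (X i) | / C1 <=
           (Num.sqrt n%:R)^-1 * psi + delta * Num.sqrt (t / n%:R).

Definition Gj_delta (n : nat) (U : Type) (Z : 'I_n -> U) (G : set (U -> R))
  (NF : (U -> R) -> R) (delta : R) : set (U -> R) :=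
  [set f | G f /\ NF f + empnorm Z f / delta <= 1].

Definition lambda_n (n p : nat) (C1 epsilon : R) (psi : 'I_p -> R -> R)
  (w : 'I_p -> R) (j : 'I_p) : R :=
  C1 * ((Num.sqrt n%:R)^-1 * psi j (w j) / w j
        + Num.sqrt (ln (p%:R / epsilon) / n%:R)).
Definition rho_n (n p : nat) (C1 epsilon : R) (psi : 'I_p -> R -> R)
  (w : 'I_p -> R) (j : 'I_p) : R :=
  lambda_n n C1 epsilon psi w j * w j.

Definition pow00 (a x : R) : R := if a == 0 then 0 else powR a x.

Definition design_j (n D p : nat) (d : 'I_p -> nat) (sel : forall j, 'I_(d j) -> 'I_D)
  (X : 'I_n -> 'rV[R]_D) (j : 'I_p) : 'I_n -> 'rV[R]_(d j) :=
  fun i => subvec (sel j) (X i).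

Definition add_comp (D p : nat) (d : 'I_p -> nat) (sel : forall j, 'I_(d j) -> 'I_D)
  (g : forall j, 'rV[R]_(d j) -> R) : 'rV[R]_D -> R :=
  fun x => \sum_(j < p) g j (subvec (sel j) x).

Definition cdiff (p : nat) (d : 'I_p -> nat) (g h : forall j, 'rV[R]_(d j) -> R) :
  forall j, 'rV[R]_(d j) -> R := fun j x => g j x - h j x.

Definition penalty (n D p : nat) (d : 'I_p -> nat) (sel : forall j, 'I_(d j) -> 'I_D)
  (X : 'I_n -> 'rV[R]_D) (NF : forall j, ('rV[R]_(d j) -> R) -> R)
  (lam rho : 'I_p -> R) (g : forall j, 'rV[R]_(d j) -> R) : R :=
  \sum_(j < p) (rho j * NF j (g j) + lam j * empnorm (design_j sel X j) (g j)).

End Defs.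

(* On an event of probability at least [1 - epsilon], the noise is dominated
   componentwise by the penalty: for every [j] and every [f] in [G_j],
   [|<eps, f>_n| <= rho_j ||f||_F + lambda_j ||f||_n].  For [f] in the unit ball
   [G_j(w_j)] this is the maximal inequality with [t = log (p / epsilon)], the
   general case follows by homogeneity, and a union bound over the [p]
   components costs [p e^{-t} = epsilon].
   On that event, comparing the objective at [ghat] and [gbar] gives a basic
   inequality in which the penalty of [ghat - gbar] on the set [S] appears on
   the right.  If this part dominates the rest ([U <= xi0 T]), the compatibility
   condition bounds it by the prediction error and AM-GM absorbs it; otherwise
   it is absorbed by the left-hand side because [A0 > (xi0 + 1) / (xi0 - 1)].
   Finally, components outside [S] have [lambda_j ||gbar_j||_n
   <= C0^(1-q) lambda_j^(2-q) ||gbar_j||_n^q], and those in [S] have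
   [lambda_j^2 <= C0^(-q) lambda_j^(2-q) ||gbar_j||_n^q]. *)

From HB Require Import structures.
From mathcomp Require Import all_boot all_order all_algebra.
From mathcomp Require Import all_classical all_reals all_analysis.
From mathcomp Require Import ring lra.
Set Implicit Arguments. Unset Strict Implicit. Unset Printing Implicit Defensive.
Import Order.TTheory GRing.Theory Num.Theory.
Local Open Scope ring_scope.
Local Open Scope classical_set_scope.

Definition emp_inner {R : realType} (n : nat) (U : Type) (Z : 'I_n -> U)
  (e : 'I_n -> R) (f : U -> R) : R :=
  n%:R^-1 * \sum_(i < n) e i * f (Z i).

Section EmpiricalNorm.
Context {R : realType}.
Variables (n : nat) (U : Type) (Z : 'I_n -> U).
Implicit Types (f g h : U -> R) (e : 'I_n -> R).

Lemma eq_emp2 f g : (forall i, f (Z i) = g (Z i)) -> emp2 Z f = emp2 Z g.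
Proof. by move=> fg; rewrite /emp2; congr (_ * _); apply: eq_bigr => i _; rewrite fg. Qed.

Lemma emp2_ge0 f : 0 <= emp2 Z f.
Proof. by rewrite /emp2 mulr_ge0 ?invr_ge0 ?ler0n // sumr_ge0 // => i _; apply: sqr_ge0. Qed.

Lemma empnorm_ge0 f : 0 <= empnorm Z f.
Proof. exact: sqrtr_ge0. Qed.

Lemma sqr_empnorm f : empnorm Z f ^+ 2 = emp2 Z f.
Proof. by rewrite /empnorm sqr_sqrtr // emp2_ge0. Qed.

Lemma emp2_scale (a : R) f : emp2 Z (fun x => a * f x) = a ^+ 2 * emp2 Z f.
Proof.
rewrite /emp2 mulrCA; congr (_ * _); rewrite mulr_sumr.
by apply: eq_bigr => i _; rewrite exprMn.
Qed.

Lemma empnorm_scale (a : R) f : empnorm Z (fun x => a * f x) = `|a| * empnorm Z f.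
Proof. by rewrite /empnorm emp2_scale sqrtrM ?sqr_ge0 // sqrtr_sqr. Qed.

Lemma emp2N f : emp2 Z (fun x => - f x) = emp2 Z f.
Proof. by rewrite /emp2; congr (_ * _); apply: eq_bigr => i _; rewrite sqrrN. Qed.

Lemma empnormN f : empnorm Z (fun x => - f x) = empnorm Z f.
Proof. by rewrite /empnorm emp2N. Qed.

Lemma empnorm_eq0 f : empnorm Z f = 0 -> forall i, f (Z i) = 0.
Proof.
move=> f0 i; have n_gt0 : (0 < n)%N := leq_ltn_trans (leq0n i) (ltn_ord i).
have : emp2 Z f = 0 by rewrite -sqr_empnorm f0 expr0n.
rewrite /emp2 => /eqP; rewrite mulf_eq0 invr_eq0 pnatr_eq0 gtn_eqF //=.
move=> /eqP /psumr_eq0P sum0; apply/eqP; rewrite -sqrf_eq0; apply/eqP.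
by apply: sum0 => // j _; apply: sqr_ge0.
Qed.

Lemma emp_inner_eq0 e f : empnorm Z f = 0 -> emp_inner Z e f = 0.
Proof.
by move=> /empnorm_eq0 f0; rewrite /emp_inner big1 ?mulr0 // => i _; rewrite f0 mulr0.
Qed.

Lemma emp_inner_scale e (a : R) f : emp_inner Z e (fun x => a * f x) = a * emp_inner Z e f.
Proof.
rewrite /emp_inner mulrCA; congr (_ * _); rewrite mulr_sumr.
by apply: eq_bigr => i _; ring.
Qed.

Lemma emp2_add {f g h} : (forall i, h (Z i) = f (Z i) + g (Z i)) ->
  emp2 Z h = emp2 Z f + emp2 Z g + 2 * emp_inner Z (f \o Z) g.
Proof.
move=> hfg; rewrite /emp2 /emp_inner mulrCA -!mulrDr; congr (_ * _).
by rewrite mulr_sumr -!big_split /=; apply: eq_bigr => i _; rewrite hfg; ring.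
Qed.

(* Cauchy-Schwarz: expand [0 <= emp2 Z (b f - a g)] with [a, b] the two norms. *)
Lemma emp_inner_le_empnorm f g : emp_inner Z (f \o Z) g <= empnorm Z f * empnorm Z g.
Proof.
set a := empnorm Z f; set b := empnorm Z g.
have /predU1P[ab0|ab_gt0] : (0 == a * b) || (0 < a * b).
  by rewrite -le_eqVlt; apply: mulr_ge0; apply: empnorm_ge0.
  suff -> : emp_inner Z (f \o Z) g = 0 by rewrite ab0.
  move/esym/eqP: ab0; rewrite mulf_eq0 => /orP[] /eqP /empnorm_eq0 v0.
    by rewrite /emp_inner big1 ?mulr0 // => i _ /=; rewrite v0 mul0r.
  by rewrite /emp_inner big1 ?mulr0 // => i _ /=; rewrite v0 mulr0.
have := emp2_ge0 (fun x => b * f x - a * g x).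
rewrite (@emp2_add (fun x => b * f x) (fun x => - a * g x)) => [|i]; last by ring.
rewrite !emp2_scale -!sqr_empnorm sqrrN -/a -/b.
have -> : emp_inner Z ((fun x => b * f x) \o Z) (fun x => - a * g x)
    = - (a * b) * emp_inner Z (f \o Z) g.
  rewrite /emp_inner mulrCA; congr (_ * _); rewrite mulr_sumr.
  by apply: eq_bigr => i _ /=; ring.
by move=> expansion_ge0; rewrite -(ler_pM2l ab_gt0); nra.
Qed.

Lemma empnorm_triangle {f g h} : (forall i, h (Z i) = f (Z i) + g (Z i)) ->
  empnorm Z h <= empnorm Z f + empnorm Z g.
Proof.
move=> hfg; rewrite -(ler_pXn2r (isT : (0 < 2)%N)) ?nnegrE ?addr_ge0 ?empnorm_ge0 //.
rewrite sqrrD !sqr_empnorm (emp2_add hfg); have := emp_inner_le_empnorm f g; lra.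
Qed.

Lemma empnormB_le f g : empnorm Z (fun x => f x - g x) <= empnorm Z f + empnorm Z g.
Proof. by rewrite -[empnorm Z g]empnormN; apply: empnorm_triangle. Qed.

Lemma empnorm_le_addB f g : empnorm Z g <= empnorm Z f + empnorm Z (fun x => f x - g x).
Proof.
rewrite -[empnorm Z (fun x => _ - _)]empnormN.
by apply: empnorm_triangle => i; ring.
Qed.

Lemma emp2_add_le {f g h} : (forall i, h (Z i) = f (Z i) + g (Z i)) ->
  emp2 Z h <= 2 * emp2 Z f + 2 * emp2 Z g.
Proof.
move=> hfg; rewrite (emp2_add hfg); have := emp_inner_le_empnorm f g.
have := sqr_ge0 (empnorm Z f - empnorm Z g); rewrite -!sqr_empnorm; nra.
Qed.

End EmpiricalNorm.

Section FunSubspace.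
Context {R : realType} (U : Type) (G : set (U -> R)) (N : (U -> R) -> R).

Lemma fun_subspaceB f g : fun_subspace G -> G f -> G g -> G (fun x => f x - g x).
Proof.
move=> [_ [GD GZ]] Gf Gg.
rewrite (_ : (fun x => _) = (fun x => f x + (-1) * g x)); last by apply/funext => x; ring.
exact/GD/GZ.
Qed.

Lemma seminormB_le f g : fun_subspace G -> seminorm_on G N -> G f -> G g ->
  N (fun x => f x - g x) <= N f + N g.
Proof.
move=> [_ [_ GZ]] [_ [NZ ND]] Gf Gg.
rewrite (_ : (fun x => _) = (fun x => f x + (-1) * g x)); last by apply/funext => x; ring.
by apply: le_trans (ND _ _ Gf (GZ _ _ Gg)) _; rewrite NZ // normrN normr1 mul1r.
Qed.

End FunSubspace.

Lemma emp2_residual {R : realType} n D (X : 'I_n -> 'rV[R]_D) (gs g : 'rV[R]_D -> R)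
  (e : 'I_n -> R) :
  emp2 (fun i : 'I_n => i) (fun i => gs (X i) + e i - g (X i)) =
  emp2 X (fun x => g x - gs x) - 2 * emp_inner X e (fun x => g x - gs x)
  + emp2 (fun i : 'I_n => i) e.
Proof.
rewrite /emp2 /emp_inner [2 * (_ * _)]mulrCA -mulrBr -mulrDr; congr (_ * _).
by rewrite mulr_sumr -sumrB -big_split /=; apply: eq_bigr => i _; ring.
Qed.


Section Pow00.
Context {R : realType}.
Implicit Types (lam x q : R).

Lemma pow00_ge0 (a x : R) : 0 <= pow00 a x.
Proof. by rewrite /pow00; case: ifP => _ //; apply: powR_ge0. Qed.

(* [lam x = lam^(2-q) x^q (x/lam)^(1-q)] and [x/lam <= C0]. *)
Lemma lam_mul_le_pow00 lam x C0 q : 0 < lam -> 0 <= x <= C0 * lam -> 0 <= q <= 1 ->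
  lam * x <= C0 `^ (1 - q) * (pow00 lam (2 - q) * pow00 x q).
Proof.
move=> lam_gt0 /andP[x_ge0 x_le] /andP[q_ge0 q_le1].
have [->|x_gt0] := eqVneq x 0; first by rewrite /pow00 eqxx !mulr0.
have {}x_gt0 : 0 < x by rewrite lt_neqAle eq_sym x_gt0.
rewrite /pow00 !gt_eqF //.
have lamE : lam `^ (2 - q) = lam * lam `^ (1 - q).
  rewrite (_ : 2 - q = 1 + (1 - q)); last by ring.
  by rewrite powRD ?(gt_eqF lam_gt0) ?implybT // powRr1 // ltW.
have xE : x = x `^ q * (lam `^ (1 - q) * (x / lam) `^ (1 - q)).
  rewrite -powRM ?ltW ?divr_gt0 // [lam * _]mulrC divfK ?gt_eqF //.
  rewrite -powRD ?(gt_eqF x_gt0) ?implybT // addrC subrK.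
  by symmetry; apply: powRr1; apply: ltW.
have ratio_le : (x / lam) `^ (1 - q) <= C0 `^ (1 - q).
  apply: ge0_ler_powR; first by rewrite subr_ge0.
  - by rewrite nnegrE divr_ge0 // ltW.
  - by rewrite nnegrE -(pmulr_lge0 _ lam_gt0); apply: le_trans x_le.
  - by rewrite ler_pdivrMr.
have c_ge0 := mulr_ge0 (mulr_ge0 (ltW lam_gt0) (powR_ge0 x q)) (powR_ge0 lam (1 - q)).
rewrite lamE {1}xE.
set c := lam * x `^ q * lam `^ (1 - q).
rewrite (_ : lam * _ = c * (x / lam) `^ (1 - q)); last by rewrite /c; ring.
by rewrite (_ : _ * (lam * _ * _) = c * C0 `^ (1 - q)) ?ler_wpM2l // /c; ring.
Qed.

Lemma lam_sqr_le_pow00 lam x C0 q : 0 < lam -> C0 * lam < x -> 0 < C0 -> 0 <= q ->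
  lam ^+ 2 <= C0^-1 `^ q * (pow00 lam (2 - q) * pow00 x q).
Proof.
move=> lam_gt0 x_gt C0_gt0 q_ge0.
have x_gt0 : 0 < x by apply: le_lt_trans x_gt; rewrite mulr_ge0 ?ltW.
rewrite /pow00 !gt_eqF //.
have lamE : lam ^+ 2 = lam `^ (2 - q) * lam `^ q.
  by rewrite -powRD ?(gt_eqF lam_gt0) ?implybT // subrK -powR_mulrn // ltW.
have lam_le : lam `^ q <= C0^-1 `^ q * x `^ q.
  rewrite -powRM ?invr_ge0 ?(ltW C0_gt0) ?(ltW x_gt0) //; apply: ge0_ler_powR => //.
  - by rewrite nnegrE ltW.
  - by rewrite nnegrE; apply: mulr_ge0; [rewrite invr_ge0|]; apply: ltW.
  - by rewrite ler_pdivlMl // ltW.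
have := powR_ge0 lam (2 - q).
by rewrite lamE; nra.
Qed.

End Pow00.

Section ScalarOracle.
Context {R : realFieldType}.

Lemma le_amgm (x y z : R) : 0 <= x -> 0 <= y -> 0 <= z -> z ^+ 2 <= 4 * x * y ->
  z <= x + y.
Proof.
move=> x_ge0 y_ge0 z_ge0 z2_le.
rewrite -(ler_pXn2r (isT : (0 < 2)%N)) ?nnegrE ?addr_ge0 //.
by apply: le_trans z2_le _; have := sqr_ge0 (x - y); nra.
Qed.

Lemma ler_mul_add3 (K c1 c2 c3 x y z : R) : 0 <= x -> 0 <= y -> 0 <= z ->
  c1 <= K -> c2 <= K -> c3 <= K -> c1 * x + c2 * y + c3 * z <= K * (x + y + z).
Proof. nra. Qed.

Variables (A0 xi0 kappa0 : R).

Definition cone_const : R := 7 + 14 * A0 + 64 * A0 ^+ 2 / kappa0 ^+ 2.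

Definition off_cone_const : R :=
  let delta := A0 - 1 - (A0 + 1) / xi0 in
  (1 + 2 * A0) * (3 + (A0 - 1) * (1 + xi0^-1) / delta).

Definition oracle_const : R := Num.max cone_const off_cone_const.

Lemma one_lt_A0 : 1 < xi0 -> (xi0 + 1) / (xi0 - 1) < A0 -> 1 < A0.
Proof.
move=> xi0_gt1; rewrite ltr_pdivrMr ?subr_gt0 // => A0_gt.
have : 0 < (A0 - 1) * (xi0 - 1) by lra.
by rewrite pmulr_lgt0 ?subr_gt0.
Qed.

Lemma oracle_const_ge0 : 1 <= A0 -> 0 <= oracle_const.
Proof.
move=> A0_ge1; apply: le_trans (_ : cone_const <= _); last by rewrite le_max lexx.
rewrite /cone_const.
have : 0 <= 64 * A0 ^+ 2 / kappa0 ^+ 2.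
  by apply: mulr_ge0; [apply: mulr_ge0 (sqr_ge0 _) | rewrite invr_ge0 sqr_ge0].
lra.
Qed.

Variables (h a dd U T B M : R).

(* Compatibility bounds [T] by the prediction error, and AM-GM then absorbs it. *)
Lemma scalar_oracle_cone : 1 <= A0 -> 0 < kappa0 ->
  0 <= h -> 0 <= a -> 0 <= U -> 0 <= T -> 0 <= B -> 0 <= M ->
  h / 2 + (A0 - 1) * U <= a / 2 + 2 * A0 * B + (A0 + 1) * T ->
  dd <= 2 * h + 2 * a -> kappa0 ^+ 2 * T ^+ 2 <= M * dd ->
  h / 2 + dd / 2 + (A0 - 1) * (U + T) <= cone_const * (a + B + M).
Proof.
move=> A0_ge1 kappa0_gt0 h_ge0 a_ge0 U_ge0 T_ge0 B_ge0 M_ge0 basic dd_le compat.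
have kappa2_gt0 : 0 < kappa0 ^+ 2 by rewrite exprn_gt0.
set m := M / kappa0 ^+ 2.
have m_ge0 : 0 <= m by rewrite divr_ge0 // ltW.
have T2_le : T ^+ 2 <= 2 * m * (h + a).
  rewrite (_ : 2 * m * _ = M * (2 * h + 2 * a) / kappa0 ^+ 2); last first.
    by rewrite /m; field; rewrite gt_eqF.
  rewrite ler_pdivlMr // [_ * kappa0 ^+ 2]mulrC.
  exact: le_trans compat (ler_wpM2l M_ge0 dd_le).
have AT_le : 2 * A0 * T <= (h + a) / 4 + 8 * A0 ^+ 2 * m.
  apply: le_amgm.
  - by rewrite divr_ge0 ?addr_ge0.
  - by apply: mulr_ge0 m_ge0; apply: mulr_ge0 (sqr_ge0 _).
  - by apply: mulr_ge0 T_ge0; apply: mulr_ge0; lra.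
  - by have := ler_wpM2l (sqr_ge0 A0) T2_le; rewrite !exprMn; lra.
have Am_ge0 : 0 <= 64 * A0 ^+ 2 / kappa0 ^+ 2.
  by apply: divr_ge0; [apply: mulr_ge0 (sqr_ge0 _) | apply: ltW].
apply: (@le_trans _ _ (7 * a + 14 * A0 * B + 64 * A0 ^+ 2 / kappa0 ^+ 2 * M)).
  have AT_ge0 : 0 <= (A0 - 1) * T by rewrite mulr_ge0 // subr_ge0.
  have AU_ge0 : 0 <= (A0 - 1) * U by rewrite mulr_ge0 // subr_ge0.
  have AB_ge0 : 0 <= A0 * B by rewrite mulr_ge0 // (le_trans ler01).
  have Am_M_ge0 := mulr_ge0 (sqr_ge0 A0) m_ge0.
  by rewrite /m in AT_le Am_M_ge0; lra.
by apply: ler_mul_add3 => //; rewrite /cone_const; lra.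
Qed.

(* Off the cone [T <= U / xi0], and [A0 > (xi0 + 1) / (xi0 - 1)] makes the
   coefficient [delta] of [U] in the basic inequality positive. *)
Lemma scalar_oracle_off_cone : 1 < xi0 -> (xi0 + 1) / (xi0 - 1) < A0 ->
  0 <= h -> 0 <= a -> 0 <= U -> 0 <= T -> 0 <= B -> 0 <= M ->
  h / 2 + (A0 - 1) * U <= a / 2 + 2 * A0 * B + (A0 + 1) * T ->
  dd <= 2 * h + 2 * a -> xi0 * T < U ->
  h / 2 + dd / 2 + (A0 - 1) * (U + T) <= off_cone_const * (a + B + M).
Proof.
move=> xi0_gt1 A0_gt h_ge0 a_ge0 U_ge0 T_ge0 B_ge0 M_ge0 basic dd_le off_cone.
have A0_gt1 := one_lt_A0 xi0_gt1 A0_gt.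
rewrite /off_cone_const; set delta := A0 - 1 - _; set c := 3 + _.
have xi0_gt0 : 0 < xi0 by lra.
have delta_gt0 : 0 < delta.
  rewrite ltr_pdivrMr ?subr_gt0 // in A0_gt.
  by rewrite subr_gt0 ltr_pdivrMr //; lra.
have c_ge3 : 3 <= c.
  rewrite lerDl; apply: divr_ge0 (ltW delta_gt0); apply: mulr_ge0; first lra.
  by apply: addr_ge0 => //; rewrite invr_ge0 ltW.
have T_le : T <= U / xi0 by rewrite ler_pdivlMr // mulrC ltW.
have basic' : h / 2 + delta * U <= a / 2 + 2 * A0 * B.
  have : (A0 + 1) * T <= (A0 + 1) * (U / xi0) by rewrite ler_wpM2l //; lra.
  by rewrite /delta; lra.
have c_delta : (A0 - 1) * (1 + xi0^-1) = c * delta - 3 * delta.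
  by rewrite /c; field; rewrite !gt_eqF.
have cb : c * (h / 2 + delta * U) <= c * (a / 2 + 2 * A0 * B).
  by rewrite ler_wpM2l //; lra.
have TU : (A0 - 1) * T <= (A0 - 1) * (U / xi0) by rewrite ler_wpM2l //; lra.
apply: (@le_trans _ _ ((1 + c / 2) * a + (2 * c * A0) * B + 0 * M)).
  by nra.
by apply: ler_mul_add3 => //; nra.
Qed.

Lemma scalar_oracle : 1 < xi0 -> 0 < kappa0 -> (xi0 + 1) / (xi0 - 1) < A0 ->
  0 <= h -> 0 <= a -> 0 <= U -> 0 <= T -> 0 <= B -> 0 <= M ->
  h / 2 + (A0 - 1) * U <= a / 2 + 2 * A0 * B + (A0 + 1) * T ->
  dd <= 2 * h + 2 * a -> (U <= xi0 * T -> kappa0 ^+ 2 * T ^+ 2 <= M * dd) ->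
  h / 2 + dd / 2 + (A0 - 1) * (U + T) <= oracle_const * (a + B + M).
Proof.
move=> xi0_gt1 kappa0_gt0 A0_gt h_ge0 a_ge0 U_ge0 T_ge0 B_ge0 M_ge0 basic dd_le compat.
have A0_gt1 := one_lt_A0 xi0_gt1 A0_gt.
have aBM_ge0 : 0 <= a + B + M by rewrite !addr_ge0.
have [/compat cone|off_cone] := lerP U (xi0 * T).
  apply: le_trans (scalar_oracle_cone (ltW A0_gt1) kappa0_gt0 h_ge0 a_ge0 U_ge0 T_ge0
    B_ge0 M_ge0 basic dd_le cone) (ler_wpM2r aBM_ge0 _).
  by rewrite le_max lexx.
apply: le_trans (scalar_oracle_off_cone xi0_gt1 A0_gt h_ge0 a_ge0 U_ge0 T_ge0
  B_ge0 M_ge0 basic dd_le off_cone) (ler_wpM2r aBM_ge0 _).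
by rewrite le_max lexx orbT.
Qed.

End ScalarOracle.

Section AdditiveOracle.
Context {R : realType}.
Variables (n p D : nat) (d : 'I_p -> nat) (sel : forall j, 'I_(d j) -> 'I_D).
Variables (X : 'I_n -> 'rV[R]_D) (G : forall j, set ('rV[R]_(d j) -> R)).
Variables (NF : forall j, ('rV[R]_(d j) -> R) -> R) (lam w : 'I_p -> R).
(* Otherwise [Set Implicit Arguments] makes the component index [j] implicit. *)
Arguments G : clear implicits.
Arguments NF : clear implicits.
Hypotheses (G_sub : forall j, fun_subspace (G j))
  (NF_semi : forall j, seminorm_on (G j) (NF j)).
Hypotheses (lam_gt0 : forall j, 0 < lam j) (w_ge0 : forall j, 0 <= w j).

Local Notation comps := (forall j, 'rV[R]_(d j) -> R).
Local Notation Xj := (design_j sel X).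
Local Notation pen := (penalty sel X NF lam (fun j => lam j * w j)).
Implicit Types (f g : comps) (S : {set 'I_p}).

Definition smooth_pen f := \sum_(j < p) lam j * w j * NF j (f j).
Definition pen_in S f := \sum_(j < p | j \in S) lam j * empnorm (Xj j) (f j).
Definition pen_out S f := \sum_(j < p | j \notin S) lam j * empnorm (Xj j) (f j).

Definition objective (A0 : R) (Y : 'I_n -> R) f :=
  emp2 (fun i : 'I_n => i) (fun i => Y i - add_comp sel f (X i)) / 2 + A0 * pen f.

Lemma add_comp_cdiff f g x :
  add_comp sel (cdiff f g) x = add_comp sel f x - add_comp sel g x.
Proof. by rewrite /add_comp -sumrB. Qed.

Lemma penaltyE S f : pen f = smooth_pen f + pen_in S f + pen_out S f.
Proof. by rewrite /penalty big_split /= [X in _ + X](bigID (fun j => j \in S)) /= addrA. Qed.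

Lemma smooth_pen_ge0 f : (forall j, G j (f j)) -> 0 <= smooth_pen f.
Proof.
move=> Gf; apply: sumr_ge0 => j _.
by rewrite mulr_ge0 ?(NF_semi j).1 // mulr_ge0 // ltW.
Qed.

Lemma pen_in_ge0 S f : 0 <= pen_in S f.
Proof. by apply: sumr_ge0 => j _; rewrite mulr_ge0 ?empnorm_ge0 ?(ltW (lam_gt0 j)). Qed.

Lemma pen_out_ge0 S f : 0 <= pen_out S f.
Proof. by apply: sumr_ge0 => j _; rewrite mulr_ge0 ?empnorm_ge0 ?(ltW (lam_gt0 j)). Qed.

Lemma penalty_cdiff_le S f g : (forall j, G j (f j)) -> (forall j, G j (g j)) ->
  pen g - pen f <= 2 * (smooth_pen g + pen_out S g)
                   - (smooth_pen (cdiff f g) + pen_out S (cdiff f g)) + pen_in S (cdiff f g).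
Proof.
move=> Gf Gg.
have smooth_le : smooth_pen (cdiff f g) <= smooth_pen f + smooth_pen g.
  rewrite -big_split /=; apply: ler_sum => j _; rewrite -mulrDr.
  apply: ler_wpM2l; first exact: mulr_ge0 (ltW (lam_gt0 j)) (w_ge0 j).
  exact: seminormB_le (G_sub j) (NF_semi j) (Gf j) (Gg j).
have in_le : pen_in S g <= pen_in S f + pen_in S (cdiff f g).
  rewrite -big_split /=; apply: ler_sum => j _; rewrite -mulrDr.
  by apply: ler_wpM2l; [apply: ltW | apply: empnorm_le_addB].
have out_le : pen_out S (cdiff f g) <= pen_out S f + pen_out S g.
  rewrite -big_split /=; apply: ler_sum => j _; rewrite -mulrDr.
  by apply: ler_wpM2l; [apply: ltW | apply: empnormB_le].
rewrite !(penaltyE S); lra.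
Qed.

Lemma basic_inequality S (A0 : R) (e : 'I_n -> R) (gstar : 'rV[R]_D -> R) gbar gh :
  0 <= A0 -> (forall j, G j (gbar j)) -> (forall j, G j (gh j)) ->
  `|emp_inner X e (add_comp sel (cdiff gh gbar))| <= pen (cdiff gh gbar) ->
  objective A0 (fun i => gstar (X i) + e i) gh
    <= objective A0 (fun i => gstar (X i) + e i) gbar ->
  emp2 X (fun x => add_comp sel gh x - gstar x) / 2
    + (A0 - 1) * (smooth_pen (cdiff gh gbar) + pen_out S (cdiff gh gbar))
  <= emp2 X (fun x => add_comp sel gbar x - gstar x) / 2
     + 2 * A0 * (smooth_pen gbar + pen_out S gbar) + (A0 + 1) * pen_in S (cdiff gh gbar).
Proof.
move=> A0_ge0 G_gbar G_gh noise_le; rewrite /objective !emp2_residual.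
have noiseE : emp_inner X e (fun x => add_comp sel gh x - gstar x)
    - emp_inner X e (fun x => add_comp sel gbar x - gstar x)
    = emp_inner X e (add_comp sel (cdiff gh gbar)).
  rewrite /emp_inner -mulrBr -sumrB; congr (_ * _); apply: eq_bigr => i _.
  by rewrite add_comp_cdiff; ring.
have := ler_wpM2l A0_ge0 (penalty_cdiff_le S G_gh G_gbar).
have := ler_norm (emp_inner X e (add_comp sel (cdiff gh gbar))).
rewrite (penaltyE S (cdiff gh gbar)) in noise_le; lra.
Qed.

Lemma oracle_inequality_on S (A0 xi0 kappa0 : R) (e : 'I_n -> R) (gstar : 'rV[R]_D -> R)
  gbar gh :
  1 < xi0 -> 0 < kappa0 -> (xi0 + 1) / (xi0 - 1) < A0 ->
  (forall j, G j (gbar j)) -> (forall j, G j (gh j)) ->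
  (forall f, (forall j, G j (f j)) ->
     smooth_pen f + pen_out S f <= xi0 * pen_in S f ->
     kappa0 ^+ 2 * pen_in S f ^+ 2
       <= (\sum_(j < p | j \in S) lam j ^+ 2) * emp2 X (add_comp sel f)) ->
  (forall f, (forall j, G j (f j)) -> `|emp_inner X e (add_comp sel f)| <= pen f) ->
  (forall g, (forall j, G j (g j)) ->
     objective A0 (fun i => gstar (X i) + e i) gh
       <= objective A0 (fun i => gstar (X i) + e i) g) ->
  emp2 X (fun x => add_comp sel gh x - gstar x) / 2
    + emp2 X (fun x => add_comp sel gh x - add_comp sel gbar x) / 2
    + (A0 - 1) * pen (cdiff gh gbar)
  <= oracle_const A0 xi0 kappa0 *
       (emp2 X (fun x => add_comp sel gbar x - gstar x)
        + (smooth_pen gbar + pen_out S gbar) + \sum_(j < p | j \in S) lam j ^+ 2).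
Proof.
move=> xi0_gt1 kappa0_gt0 A0_gt G_gbar G_gh compat noise_le gh_min.
have A0_ge0 : 0 <= A0 by apply/ltW/(lt_trans ltr01)/(one_lt_A0 xi0_gt1 A0_gt).
have G_diff j : G j (fun x => gh j x - gbar j x) by apply: fun_subspaceB.
have diffE : emp2 X (add_comp sel (cdiff gh gbar))
    = emp2 X (fun x => add_comp sel gh x - add_comp sel gbar x).
  by apply: eq_emp2 => i; rewrite add_comp_cdiff.
rewrite (penaltyE S) [smooth_pen _ + _ + _]addrAC -diffE.
apply: scalar_oracle => //.
- exact: emp2_ge0.
- exact: emp2_ge0.
- by rewrite addr_ge0 ?smooth_pen_ge0 ?pen_out_ge0.
- exact: pen_in_ge0.
- by rewrite addr_ge0 ?smooth_pen_ge0 ?pen_out_ge0.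
- by apply: sumr_ge0 => j _; apply: sqr_ge0.
- exact: basic_inequality A0_ge0 G_gbar G_gh (noise_le _ G_diff) (gh_min _ G_gbar).
- rewrite -(emp2N X (fun x => add_comp sel gbar x - gstar x)).
  by apply: emp2_add_le => i; rewrite add_comp_cdiff; ring.
- exact: compat.
Qed.

Definition active_set (C0 : R) gbar : {set 'I_p} :=
  [set j | C0 * lam j < empnorm (Xj j) (gbar j)].

Definition sparsity_term (q : R) gbar :=
  \sum_(j < p) pow00 (lam j) (2 - q) * pow00 (empnorm (Xj j) (gbar j)) q.

Lemma sparsity_term_ge0 q gbar : 0 <= sparsity_term q gbar.
Proof. by apply: sumr_ge0 => j _; rewrite mulr_ge0 ?pow00_ge0. Qed.

Lemma pen_out_active_le (C0 q : R) gbar : 0 <= C0 -> 0 <= q <= 1 ->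
  pen_out (active_set C0 gbar) gbar <= C0 `^ (1 - q) * sparsity_term q gbar.
Proof.
move=> C0_ge0 q01; rewrite /sparsity_term mulr_sumr.
rewrite [X in _ <= X](bigID (fun j => j \in active_set C0 gbar)) /=.
apply: ler_wpDl.
  by apply: sumr_ge0 => j _; rewrite mulr_ge0 ?powR_ge0 ?mulr_ge0 ?pow00_ge0.
apply: ler_sum => j; rewrite inE -leNgt => small_j.
by apply: lam_mul_le_pow00; rewrite ?empnorm_ge0.
Qed.

Lemma sum_sqr_active_le (C0 q : R) gbar : 0 < C0 -> 0 <= q ->
  \sum_(j < p | j \in active_set C0 gbar) lam j ^+ 2 <= C0^-1 `^ q * sparsity_term q gbar.
Proof.
move=> C0_gt0 q_ge0; rewrite /sparsity_term mulr_sumr.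
rewrite [X in _ <= X](bigID (fun j => j \in active_set C0 gbar)) /=.
apply: ler_wpDr.
  by apply: sumr_ge0 => j _; rewrite mulr_ge0 ?powR_ge0 ?mulr_ge0 ?pow00_ge0.
apply: ler_sum => j; rewrite inE => large_j.
exact: lam_sqr_le_pow00.
Qed.

Lemma oracle_rhs_le (C0 q a : R) gbar : 0 < C0 -> 0 <= q <= 1 -> 0 <= a ->
  (forall j, G j (gbar j)) ->
  a + (smooth_pen gbar + pen_out (active_set C0 gbar) gbar)
    + \sum_(j < p | j \in active_set C0 gbar) lam j ^+ 2
  <= (1 + C0 `^ (1 - q) + C0^-1 `^ q) *
     (a + \sum_(j < p) (lam j * w j * NF j (gbar j)
                        + pow00 (lam j) (2 - q) * pow00 (empnorm (Xj j) (gbar j)) q)).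
Proof.
move=> C0_gt0 /andP[q_ge0 q_le1] a_ge0 G_gbar.
have out_le := pen_out_active_le gbar (ltW C0_gt0) (introT andP (conj q_ge0 q_le1)).
have sqr_le := sum_sqr_active_le gbar C0_gt0 q_ge0.
rewrite big_split /= -/(smooth_pen gbar) -/(sparsity_term q gbar).
have sp_ge0 := sparsity_term_ge0 q gbar; have sm_ge0 := smooth_pen_ge0 G_gbar.
have c1_ge0 := powR_ge0 C0 (1 - q); have c2_ge0 := powR_ge0 C0^-1 q.
have := mulr_ge0 (addr_ge0 c1_ge0 c2_ge0) (addr_ge0 a_ge0 sm_ge0).
lra.
Qed.

End AdditiveOracle.

Section Entropy.
Context {R : realType}.

Definition lift_class (D d : nat) (s : 'I_d -> 'I_D) (F : set ('rV[R]_d -> R)) :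
  set ('rV[R]_D -> R) := [set f \o subvec s | f in F].

Lemma log_cover_lift_le n D d (X : 'I_n -> 'rV[R]_D) (s : 'I_d -> 'I_D) F u :
  (log_cover X (lift_class s F) u <= log_cover (fun i => subvec s (X i)) F u)%E.
Proof.
apply: le_ereal_inf => _ [m [c Hc] <-]; exists m => //.
exists (fun k => c k \o subvec s) => _ [f Ff <-].
by have [k Hk] := Hc f Ff; exists k.
Qed.

Lemma esqrt_ge0 (x : \bar R) : (0 <= esqrt x)%E.
Proof. by case: x => [r| |] //=; rewrite lee_fin sqrtr_ge0. Qed.

Lemma le_esqrt (x y : \bar R) : (x <= y)%E -> (esqrt x <= esqrt y)%E.
Proof.
case: x => [r| |]; case: y => [s| |] //=; rewrite ?lee_fin ?leey ?sqrtr_ge0 //.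
exact: ler_wsqrtr.
Qed.

Lemma entropy_integral_ge0 n (U : Type) (Z : 'I_n -> U) (F : set (U -> R)) delta :
  (0 <= entropy_integral Z F delta)%E.
Proof. by apply: integral_ge0 => x _; apply: esqrt_ge0. Qed.

(* The integrand need not be measurable, so compare the integrals through their
   definition as suprema over simple functions. *)
Lemma le_entropy_integral n1 n2 (U1 U2 : Type) (Z1 : 'I_n1 -> U1) (Z2 : 'I_n2 -> U2)
  (F1 : set (U1 -> R)) (F2 : set (U2 -> R)) delta :
  (forall u, (log_cover Z1 F1 u <= log_cover Z2 F2 u)%E) ->
  (entropy_integral Z1 F1 delta <= entropy_integral Z2 F2 delta)%E.
Proof.
move=> le_cover; rewrite /entropy_integral !ge0_integralE => [|x _|x _]; last 2 first.
- exact: esqrt_ge0.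
- exact: esqrt_ge0.
apply: le_ereal_sup => _ [h le_h <-]; exists h => //= x.
by apply: le_trans (le_h x) _; apply: lee_restrict => y _; apply/le_esqrt/le_cover.
Qed.

End Entropy.

Section UnionBound.
Context {R : realType} (dsp : measure_display) (T : measurableType dsp).

Lemma le_measure_bigsetU (mu : {measure set T -> \bar R}) (I : Type) (s : seq I)
  (F : I -> set T) (c : R) :
  (forall i, measurable (F i)) -> (forall i, (mu (F i) <= c%:E)%E) ->
  (mu (\big[setU/set0]_(i <- s) F i) <= ((size s)%:R * c)%:E)%E.
Proof.
move=> mF muF; elim: s => [|i s IH]; first by rewrite big_nil measure0 mul0r.
rewrite big_cons /= -add1n natrD mulrDl mul1r EFinD.
apply: le_trans (measureU2 _ _ _) _ => //; first exact: bigsetU_measurable.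
exact: leeD (muF i) IH.
Qed.

Lemma probability_bigsetI_ge (P : probability T R) (I : Type) (s : seq I)
  (E : I -> set T) (delta : R) :
  (forall i, measurable (E i)) -> (forall i, ((1 - delta)%:E <= P (E i))%E) ->
  ((1 - (size s)%:R * delta)%:E <= P (\big[setI/setT]_(i <- s) E i))%E.
Proof.
move=> mE PE; rewrite -[\big[setI/setT]_(i <- s) E i]setCK setC_bigsetI.
rewrite probability_setC; last by apply: bigsetU_measurable => i _; apply: measurableC.
rewrite EFinB; apply: leeB => //; apply: le_measure_bigsetU => [i|i].
  exact: measurableC.
rewrite [X in (X <= _)%E](probability_setC P (mE i)) -[delta](subKr 1) EFinB.
exact: leeB.
Qed.

End UnionBound.

(* Homogeneity: rescale [f] into the unit ball [Gj_delta Z Gs N w]. *)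
Lemma emp_inner_le_seminorm {R : realType} n (U : Type) (Z : 'I_n -> U)
  (Gs : set (U -> R)) (N : (U -> R) -> R) (w b : R) (e : 'I_n -> R) :
  fun_subspace Gs -> seminorm_on Gs N -> 0 < w ->
  (forall f, Gj_delta Z Gs N w f -> `|emp_inner Z e f| <= b) ->
  forall f, Gs f -> `|emp_inner Z e f| <= b * (N f + empnorm Z f / w).
Proof.
move=> [_ [_ GsZ]] [N_ge0 [NZ _]] w_gt0 ball_le f Gf.
set s := N f + empnorm Z f / w.
have Nf_ge0 := N_ge0 f Gf.
have [s0|s_neq0] := eqVneq s 0.
  have f0 : empnorm Z f = 0.
    apply/eqP; rewrite eq_le empnorm_ge0 andbT -(@pmulr_lle0 _ w^-1) ?invr_gt0 //.
    by rewrite /s in s0; lra.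
  by rewrite s0 mulr0 emp_inner_eq0 // normr0.
have s_gt0 : 0 < s.
  by rewrite lt_neqAle eq_sym s_neq0 addr_ge0 // divr_ge0 ?empnorm_ge0 ?ltW.
have s_inv_ge0 : 0 <= s^-1 by rewrite invr_ge0 ltW.
have ball_f : Gj_delta Z Gs N w (fun x => s^-1 * f x).
  split; first exact: GsZ.
  rewrite NZ // empnorm_scale ger0_norm // -mulrA -mulrDr mulVf //.
have := ball_le _ ball_f.
by rewrite emp_inner_scale normrM ger0_norm // ler_pdivrMl // mulrC.
Qed.

Section ComponentNoise.
Context {R : realType} (dsp : measure_display) (Omega : measurableType dsp).
Variables (P : probability Omega R) (n D : nat) (X : 'I_n -> 'rV[R]_D).
Variables (eps : 'I_n -> Omega -> R) (C1 : R).
Hypotheses (C1_gt0 : 0 < C1) (maximal : noise_maximal_ineq P X eps C1).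

Lemma component_noise_event d (s : 'I_d -> 'I_D) (Gs : set ('rV[R]_d -> R))
  (N : ('rV[R]_d -> R) -> R) (w psi t : R) :
  fun_subspace Gs -> seminorm_on Gs N -> 0 < w -> 0 < t ->
  let Z := fun i => subvec s (X i) in
  (entropy_integral Z (Gj_delta Z Gs N w) w <= psi%:E)%E ->
  exists E : set Omega, measurable E /\ ((1 - expR (- t))%:E <= P E)%E /\
    forall omega, E omega -> forall f, Gs f ->
      `|emp_inner Z (eps^~ omega) f| <=
        C1 * ((Num.sqrt n%:R)^-1 * psi + w * Num.sqrt (t / n%:R))
          * (N f + empnorm Z f / w).
Proof.
move=> Gs_sub N_semi w_gt0 t_gt0 Z entropy_le.
have lift_small h : lift_class s (Gj_delta Z Gs N w) h -> empnorm X h <= w.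
  move=> [f [Gf ball_f] <-].
  have : empnorm Z f / w <= 1 by have := N_semi.1 f Gf; lra.
  by rewrite ler_pdivrMr // mul1r.
have lift_entropy :
    (entropy_integral X (lift_class s (Gj_delta Z Gs N w)) w <= psi%:E)%E.
  by apply: le_trans entropy_le; apply: le_entropy_integral => u; apply: log_cover_lift_le.
have [E [mE [PE E_bound]]] := maximal w_gt0 lift_small lift_entropy t_gt0.
exists E; split => //; split => // omega Eomega.
apply: emp_inner_le_seminorm => // f ball_f.
rewrite -ler_pdivrMl // mulrC.
exact: (E_bound omega Eomega (f \o subvec s) (ex_intro2 _ _ f ball_f erefl)).
Qed.

End ComponentNoise.

Lemma emp_inner_add_comp {R : realType} n D p (d : 'I_p -> nat)
  (sel : forall j, 'I_(d j) -> 'I_D) (X : 'I_n -> 'rV[R]_D) (e : 'I_n -> R)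
  (f : forall j, 'rV[R]_(d j) -> R) :
  emp_inner X e (add_comp sel f) = \sum_(j < p) emp_inner (design_j sel X j) e (f j).
Proof.
rewrite /emp_inner -mulr_sumr exchange_big; congr (_ * _).
by apply: eq_bigr => i _; rewrite /add_comp mulr_sumr.
Qed.

Lemma lambda_n_gt0 {R : realType} n p (C1 epsilon : R) (psi : 'I_p -> R -> R)
  (w : 'I_p -> R) j :
  (0 < n)%N -> 0 < C1 -> 0 < epsilon < 1 -> 0 < w j -> 0 <= psi j (w j) ->
  0 < lambda_n n C1 epsilon psi w j.
Proof.
move=> n_gt0 C1_gt0 /andP[eps_gt0 eps_lt1] w_gt0 psi_ge0.
rewrite /lambda_n pmulr_rgt0 // ltr_wpDl //.
  by apply: divr_ge0 (ltW w_gt0); apply: mulr_ge0 psi_ge0; rewrite invr_ge0 sqrtr_ge0.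
rewrite sqrtr_gt0 divr_gt0 ?ltr0n // ln_gt0 // ltr_pdivlMr // mul1r.
by apply: lt_le_trans eps_lt1 _; rewrite ler1n (leq_ltn_trans (leq0n j) (ltn_ord j)).
Qed.

Lemma noise_event {R : realType} (n p D : nat) (d : 'I_p -> nat)
  (sel : forall j, 'I_(d j) -> 'I_D) (X : 'I_n -> 'rV[R]_D)
  (G : forall j, set ('rV[R]_(d j) -> R)) (NF : forall j, ('rV[R]_(d j) -> R) -> R)
  (dsp : measure_display) (Omega : measurableType dsp) (P : probability Omega R)
  (eps : 'I_n -> Omega -> R) (C1 epsilon : R) (w : 'I_p -> R) (psi : 'I_p -> R -> R) :
  (0 < n)%N -> (0 < p)%N ->
  (forall j, fun_subspace (G j)) -> (forall j, seminorm_on (G j) (NF j)) ->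
  0 < C1 -> noise_maximal_ineq P X eps C1 ->
  (forall j, (entropy_integral (design_j sel X j)
       (Gj_delta (design_j sel X j) (G j) (NF j) (w j)) (w j) <= (psi j (w j))%:E)%E) ->
  0 < epsilon < 1 -> (forall j, 0 < w j) ->
  exists E : set Omega, measurable E /\ ((1 - epsilon)%:E <= P E)%E /\
  forall omega, E omega -> forall f : forall j, 'rV[R]_(d j) -> R, (forall j, G j (f j)) ->
    `|emp_inner X (eps^~ omega) (add_comp sel f)|
      <= penalty sel X NF (lambda_n n C1 epsilon psi w) (rho_n n C1 epsilon psi w) f.
Proof.
move=> n_gt0 p_gt0 G_sub NF_semi C1_gt0 maximal entropy_le /andP[eps_gt0 eps_lt1] w_gt0.
set t := ln (p%:R / epsilon).
have p_eps_gt1 : 1 < p%:R / epsilon.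
  by rewrite ltr_pdivlMr // mul1r; apply: lt_le_trans eps_lt1 _; rewrite ler1n.
have t_gt0 : 0 < t by rewrite ln_gt0.
have exp_t : expR (- t) = epsilon / p%:R.
  by rewrite expRN lnK ?posrE ?(lt_trans ltr01) // invf_div.
have component j : exists Ej : set Omega,
    [/\ measurable Ej, ((1 - epsilon / p%:R)%:E <= P Ej)%E &
      forall omega, Ej omega -> forall f, G j f ->
        `|emp_inner (design_j sel X j) (eps^~ omega) f|
          <= rho_n n C1 epsilon psi w j * NF j f
             + lambda_n n C1 epsilon psi w j * empnorm (design_j sel X j) f].
  have [Ej [mEj [PEj Ej_bound]]] := component_noise_event C1_gt0 maximal
    (G_sub j) (NF_semi j) (w_gt0 j) t_gt0 (entropy_le j).
  exists Ej; split => //; first by rewrite -exp_t.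
  move=> omega Ejomega f Gf; apply: le_trans (Ej_bound omega Ejomega f Gf) _.
  rewrite /rho_n /lambda_n -/t le_eqVlt; apply/orP; left; apply/eqP.
  by field; rewrite gt_eqF //= sqrtr_eq0 -ltNge ltr0n.
have [Ef Ef_spec] := choice component.
exists (\big[setI/setT]_(j <- enum 'I_p) Ef j); split.
  by apply: bigsetI_measurable => j _; case: (Ef_spec j).
split.
  have := @probability_bigsetI_ge R _ _ P _ (enum 'I_p) Ef (epsilon / p%:R).
  rewrite size_enum_ord mulrCA mulfV ?mulr1; [apply|by rewrite pnatr_eq0 -lt0n].
    by move=> j; case: (Ef_spec j).
  by move=> j; case: (Ef_spec j).
move=> omega Eomega f Gf.
have Ef_omega j : Ef j omega.
  by move: Eomega; rewrite -bigcap_seq; apply; rewrite /= mem_enum.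
rewrite emp_inner_add_comp; apply: le_trans (ler_norm_sum _ _ _) _.
by apply: ler_sum => j _; case: (Ef_spec j) => _ _; apply.
Qed.

Theorem corollary2 (R : realType) (q A0 C0 xi0 kappa0 : R) :
  0 <= q <= 1 -> 0 < C0 -> 0 < kappa0 -> 1 < xi0 ->
  (xi0 + 1) / (xi0 - 1) < A0 ->
  exists K : R,
  forall (n p D : nat) (d : 'I_p -> nat) (sel : forall j, 'I_(d j) -> 'I_D)
    (X : 'I_n -> 'rV[R]_D)
    (G : forall j, set ('rV[R]_(d j) -> R))
    (NF : forall j, ('rV[R]_(d j) -> R) -> R)
    (dsp : measure_display) (Omega : measurableType dsp) (P : probability Omega R)
    (eps : 'I_n -> Omega -> R) (gstar : 'rV[R]_D -> R)
    (D0 D1 C1 epsilon : R) (w : 'I_p -> R) (psi : 'I_p -> R -> R)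
    (gbar : forall j, 'rV[R]_(d j) -> R),
  (0 < n)%N -> (0 < p)%N ->
  (forall j, injective (sel j)) ->
  (forall j, fun_subspace (G j)) ->
  (forall j, seminorm_on (G j) (NF j)) ->
  (* sub-Gaussian noise condition, and C1 as in the maximal inequality *)
  subgaussian_noise P eps D0 D1 ->
  0 < C1 -> noise_maximal_ineq P X eps C1 ->
  (* entropy condition *)
  (forall j delta, 0 < delta <= 1 ->
     (entropy_integral (design_j sel X j) (Gj_delta (design_j sel X j) (G j) (NF j) delta) delta
       <= (psi j delta)%:E)%E) ->
  (* tuning parameters *)
  0 < epsilon < 1 -> (forall j, 0 < w j <= 1) ->
  let lam := lambda_n n C1 epsilon psi w in
  let rho := rho_n n C1 epsilon psi w in
  (forall j, G j (gbar j)) ->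
  let S := [set j : 'I_p | C0 * lam j < empnorm (design_j sel X j) (gbar j)]%SET in
  (* empirical compatibility condition for (S, kappa0, xi0) *)
  (forall f : forall j, 'rV[R]_(d j) -> R, (forall j, G j (f j)) ->
     \sum_(j < p) lam j * w j * NF j (f j)
       + \sum_(j < p | j \notin S) lam j * empnorm (design_j sel X j) (f j)
     <= xi0 * \sum_(j < p | j \in S) lam j * empnorm (design_j sel X j) (f j) ->
     kappa0 ^+ 2 * (\sum_(j < p | j \in S) lam j * empnorm (design_j sel X j) (f j)) ^+ 2
     <= (\sum_(j < p | j \in S) lam j ^+ 2) * emp2 X (add_comp sel f)) ->
  (* conclusion: with probability at least 1 - epsilon, every minimizer satisfies the bound *)
  exists E : set Omega, measurable E /\ ((1 - epsilon)%:E <= P E)%E /\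
  forall omega, E omega ->
  forall gh : forall j, 'rV[R]_(d j) -> R,
    (forall j, G j (gh j)) ->
    (forall g : forall j, 'rV[R]_(d j) -> R, (forall j, G j (g j)) ->
       emp2 (fun i : 'I_n => i)
            (fun i => gstar (X i) + eps i omega - add_comp sel gh (X i)) / 2
         + A0 * penalty sel X NF lam rho gh
       <= emp2 (fun i : 'I_n => i)
            (fun i => gstar (X i) + eps i omega - add_comp sel g (X i)) / 2
         + A0 * penalty sel X NF lam rho g) ->
    emp2 X (fun x => add_comp sel gh x - gstar x) / 2
      + emp2 X (fun x => add_comp sel gh x - add_comp sel gbar x) / 2
      + (A0 - 1) * penalty sel X NF lam rho (cdiff gh gbar)
    <= K * (emp2 X (fun x => add_comp sel gbar x - gstar x)
            + \sum_(j < p) (rho j * NF j (gbar j)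
                 + pow00 (lam j) (2 - q)
                   * pow00 (empnorm (design_j sel X j) (gbar j)) q)).
Proof.
move=> q01 C0_gt0 kappa0_gt0 xi0_gt1 A0_gt.
exists (oracle_const A0 xi0 kappa0 * (1 + C0 `^ (1 - q) + C0^-1 `^ q)).
move=> n p D d sel X G NF dsp Omega P eps gstar D0 D1 C1 epsilon w psi gbar
  n_gt0 p_gt0 _ G_sub NF_semi _ C1_gt0 maximal entropy_le eps01 w01 lam rho
  G_gbar S compat.
have w_gt0 j : 0 < w j by case/andP: (w01 j).
have entropy_w j := entropy_le j (w j) (w01 j).
have lam_gt0 j : 0 < lam j.
  apply: lambda_n_gt0 => //; rewrite -lee_fin; apply: le_trans (entropy_w j).
  exact: entropy_integral_ge0.
have [E [mE [PE noise_le]]] :=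
  noise_event n_gt0 p_gt0 G_sub NF_semi C1_gt0 maximal entropy_w eps01 w_gt0.
exists E; split => //; split => // omega Eomega gh G_gh gh_min.
have w_ge0 j := ltW (w_gt0 j).
have A0_ge1 := ltW (one_lt_A0 xi0_gt1 A0_gt).
rewrite -[oracle_const _ _ _ * _ * _]mulrA.
apply: le_trans _ (ler_wpM2l (oracle_const_ge0 _ _ A0_ge1)
  (oracle_rhs_le sel X NF_semi lam_gt0 w_ge0 C0_gt0 q01 (emp2_ge0 _ _) G_gbar)).
apply: (oracle_inequality_on G_sub NF_semi lam_gt0 w_ge0 xi0_gt1 kappa0_gt0 A0_gt
  G_gbar G_gh compat (noise_le omega Eomega)).
exact: gh_min.
Qed.
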